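(* Let $\lambda>0$, $\mu>0$ and $0<b<a<1$, and set $\mu_1=\mu$, $\mu_2=a\mu$, $\mu_3=b\mu$. Consider the continuous-time Markov chain $\{(X(t),Y(t)),t\ge 0\}$ on the state space $\{(n,i): n\in\{0,1,2,\dots\},\ i\in\{1,2,3,4\}\}$ whose only transitions are: for $n\ge 1$ and $i\in\{1,2,3\}$, $(n,i)\to(n-1,i+1)$ at rate $\mu_i$ and $(n,i)\to(n+1,i+1)$ at rate $\lambda$; for $i\in\{1,2,3\}$, $(0,i)\to(1,i+1)$ at rate $\lambda$; for $n\ge 0$, $(n,4)\to(n+2,1)$ at rate $\lambda/2$. Define $$g(\lambda)=\frac{\frac{\mu}{\lambda+\mu}+\frac{a\mu}{\lambda+a\mu}+\frac{b\mu}{\lambda+b\mu}+0\cdot\frac{2}{\lambda}}{\frac{1}{\lambda+\mu}+\frac{1}{\lambda+a\mu}+\frac{1}{\lambda+b\mu}+\frac{2}{\lambda}}.$$ If $\lambda<g(\lambda)$, then the system is stable (i.e. the chain is positive recurrent on its recurrent states).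
   Context: This models a single-server queue where $X(t)$ is the number of customers and $Y(t)$ is the server's phase (efficiency level, phase 1 being the most efficient; phases 2, 3 are working vacations with reduced service rates and phase 4 is a regular vacation with no service during which the system waits for two arrivals, modeled as a single jump of $+2$ customers at rate $\lambda/2$). *)

From HB Require Import structures.
From mathcomp Require Import all_boot all_order all_algebra.
From mathcomp Require Import all_classical all_reals.
From mathcomp Require Import ereal esum.
Set Implicit Arguments. Unset Strict Implicit. Unset Printing Implicit Defensive.
Import Order.TTheory GRing.Theory Num.Theory.
Local Open Scope classical_set_scope.
Local Open Scope ring_scope.
Local Open Scope ereal_scope.

(* Recurrence / positive recurrence are defined through the embedded   *)
(* jump chain, via taboo probabilities (first-return decomposition).   *)
Section CTMC.
Variables (R : realType) (T : choiceType) (q : T -> T -> R).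

Definition out_rate (x : T) : \bar R :=
  \esum_(y in [set y | y != x]) (q x y)%:E.

(* transition probabilities of the jump (embedded) chain; an absorbing
   state (out_rate = 0) stays put *)
Definition jump_prob (x y : T) : R :=
  if out_rate x == 0%E then ((y == x)%:R)%R
  else if y == x then 0%R else (q x y / fine (out_rate x))%R.

Definition mean_holding (x : T) : \bar R :=
  if out_rate x == 0 then +oo else ((fine (out_rate x))^-1)%:E.

(* taboo x j y = P_x(Z_j = y, Z_i <> x for 1 <= i <= j), Z the jump chain *)
Fixpoint taboo (x : T) (j : nat) (y : T) : \bar R :=
  match j with
  | O => ((y == x)%:R)%:E
  | S j' => if y == x then 0
            else \esum_(w in [set: T]) (taboo x j' w * (jump_prob w y)%:E)
  end.

(* P_x(the chain returns to x after leaving it) = sum_k P_x(N = k+1) *)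
Definition return_prob (x : T) : \bar R :=
  \esum_(kw in [set: nat * T]) (taboo x kw.1 kw.2 * (jump_prob kw.2 x)%:E).

(* E_x[T_x^+], T_x^+ = first return time to x (continuous time):
   sum over jump steps j before the return of the mean holding time *)
Definition mean_return_time (x : T) : \bar R :=
  \esum_(jw in [set: nat * T]) (taboo x jw.1 jw.2 * mean_holding jw.2).

Definition recurrent (x : T) : Prop := return_prob x = 1.

Definition positive_recurrent (x : T) : Prop :=
  recurrent x /\ mean_return_time x < +oo.

Definition stable : Prop :=
  (exists x, positive_recurrent x) /\
  (forall x, recurrent x -> positive_recurrent x).

End CTMC.

(* The queue. State (n, i) : nat * 'I_4, where the ordinal i encodes   *)
(* the paper's phase i+1 (so i = 0,1,2 are phases 1,2,3, i = 3 is the  *)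
(* vacation phase 4).                                                  *)
Section Queue.
Variable R : realType.
Local Open Scope ring_scope.

Definition mu_phase (mu a b : R) (i : 'I_4) : R :=
  if val i == 0%N then mu
  else if val i == 1%N then a * mu
  else if val i == 2%N then b * mu
  else 0.

Definition queue_rate (lam mu a b : R) (x y : nat * 'I_4) : R :=
  let: (n, i) := x in
  let: (m, j) := y in
  if (val i < 3)%N then
    if val j == (val i).+1 then
      (if m == n.+1 then lam else 0) +
      (if (0 < n)%N && (m.+1 == n) then mu_phase mu a b i else 0)
    else 0
  else if (val j == 0%N) && (m == n.+2) then lam / 2 else 0.

End Queue.

From HB Require Import structures.
From mathcomp Require Import all_boot all_order all_algebra.
From mathcomp Require Import all_classical all_reals.
From mathcomp Require Import ereal esum sequences normedtype.
From mathcomp Require Import ring lra zify.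
Set Implicit Arguments.
Unset Strict Implicit.
Unset Printing Implicit Defensive.
Import Order.TTheory GRing.Theory Num.Theory.
Local Open Scope ring_scope.

(* Foster's criterion for the embedded jump chain. If V >= 0 satisfies
   1/q(w) + E_w[V(Z_1); Z_1 <> x] <= V(w) for every w <> x, where q(w) is the exit
   rate, then summing over the taboo probabilities of not having returned to x
   telescopes, and the mean return time to x is at most 1/q(x) + E_x[V(Z_1); Z_1 <> x].
   When the exit rates are bounded by M, every jump before the return takes expected
   time at least 1/M, so the probability of no return within N jumps is O(1/N) and x
   is recurrent. A Lyapunov function at x also gives one at every state x jumps to.

   For the queue take x = (2, phase 1). Away from n <= 1 the affine function
   V(n, k) = c n + b_k satisfies the drift condition with equality, where
   c = (mean duration of a cycle of the four phases) / -(mean growth of the queue over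
   a cycle) is nonnegative exactly when lam < g(lam); near n = 0 the values of V are
   solutions of the drift equation itself. Every (n, i) with n + i >= 2 is reachable
   from x, and the three remaining states are never re-entered, so not recurrent. *)

Section EsumFacts.
Local Open Scope classical_set_scope.
Local Open Scope ereal_scope.
Context {R : realType}.

Lemma esum_finite_support (T : choiceType) (f : T -> \bar R) (s : seq T) :
  uniq s -> (forall y, y \notin s -> f y = 0) -> (forall y, 0 <= f y) ->
  \esum_(y in [set: T]) f y = \sum_(y <- s) f y.
Proof.
move=> s_uniq f_out f_ge0; rewrite (esumID [set` s]) //.
rewrite [X in _ + X]esum1 ?adde0; last first.
  by move=> y [_ /= y_out]; apply: f_out; apply/negP.
by rewrite setTI esum_fset //; exact/esym/fsbig_seq.
Qed.

Lemma esumZl (T : choiceType) (S : set T) (r : R) (f : T -> \bar R) :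
  (0 <= r)%R -> (forall i, 0 <= f i) ->
  \esum_(i in S) (r%:E * f i) = r%:E * \esum_(i in S) f i.
Proof.
move=> r_ge0 f_ge0; rewrite /esum -ereal_supZl //; last first.
  by apply/set0P; exists 0; exists set0; [exact: fsets_set0 | rewrite fsbig_set0].
by rewrite image_comp; congr ereal_sup; apply: eq_imagel => X _ /=; rewrite ge0_mule_fsumr.
Qed.

Lemma esum_swap (T1 T2 : choiceType) (A : set T1) (B : set T2) (f : T1 -> T2 -> \bar R) :
  (forall i j, 0 <= f i j) ->
  \esum_(i in A) \esum_(j in B) f i j = \esum_(j in B) \esum_(i in A) f i j.
Proof.
move=> f_ge0; rewrite !esum_esum //.
rewrite (reindex_esum (A `*`` (fun=> B)) (B `*`` (fun=> A)) (fun p => (p.2, p.1))) //.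
split; first by move=> [i j] [].
- by move=> [i j] [i' j'] _ _ [-> ->].
- by move=> [j i] [Bj Ai]; exists (i, j).
Qed.

Lemma esum_nat_pair (T : choiceType) (f : nat -> T -> \bar R) :
  (forall k w, 0 <= f k w) ->
  \esum_(kw in [set: nat * T]) f kw.1 kw.2 = \sum_(k <oo) \esum_(w in [set: T]) f k w.
Proof.
move=> f_ge0; have -> : [set: nat * T] = [set: nat] `*`` (fun=> [set: T]).
  by apply/seteqP; split => -[].
rewrite -esum_esum; last by move=> *; exact: f_ge0.
by rewrite nneseries_esumT // => k; apply: esum_ge0.
Qed.

End EsumFacts.

Record bounded_rates {R : realType} {T : choiceType}
    (q : T -> T -> R) (supp : T -> seq T) (M : R) : Prop := BoundedRates {
  rate_ge0 : forall x y, 0 <= q x y;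
  rate_diag : forall x, q x x = 0;
  supp_uniq : forall x, uniq (supp x);
  rate_supp : forall x y, y \notin supp x -> q x y = 0;
  exit_rate_gt0 : forall x, 0 < \sum_(y <- supp x) q x y;
  exit_rate_le : forall x, \sum_(y <- supp x) q x y <= M }.

Section JumpChain.
Local Open Scope ereal_scope.
Context {R : realType} {T : choiceType} (q : T -> T -> R) (supp : T -> seq T) (M : R).
Hypothesis hq : bounded_rates q supp M.

Local Notation rate x := (\sum_(y <- supp x) q x y)%R.
Local Notation P := (jump_prob q).
Local Notation hold := (fun w => (rate w)^-1)%R.

Lemma out_rateE x : out_rate q x = (rate x)%:E.
Proof.
rewrite /out_rate esum_mkcond (esum_finite_support (supp_uniq hq x)).
- rewrite -sumEFin; apply: eq_bigr => y _; case: ifPn => // y_nx.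
  by case: (eqVneq y x) y_nx => [->|yx /negP[]]; [rewrite (rate_diag hq) | rewrite inE].
- by move=> y /(rate_supp hq) ->; case: ifP.
- by move=> y; case: ifP => // _; rewrite lee_fin (rate_ge0 hq).
Qed.

Lemma jump_probE x y : P x y = (q x y / rate x)%R.
Proof.
rewrite /jump_prob out_rateE eqe (gt_eqF (exit_rate_gt0 hq x)) /=.
by case: eqP => [->|//]; rewrite (rate_diag hq) mul0r.
Qed.

Lemma mean_holdingE x : mean_holding q x = ((rate x)^-1)%:E.
Proof. by rewrite /mean_holding out_rateE eqe (gt_eqF (exit_rate_gt0 hq x)). Qed.

Lemma inv_exit_rate_ge0 x : (0 <= (rate x)^-1)%R.
Proof. by rewrite invr_ge0 (ltW (exit_rate_gt0 hq x)). Qed.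

Lemma jump_prob_ge0 x y : (0 <= P x y)%R.
Proof. by rewrite jump_probE divr_ge0 ?(rate_ge0 hq) ?(ltW (exit_rate_gt0 hq x)). Qed.

Lemma sum_jump_prob x : (\sum_(y <- supp x) P x y)%R = 1%R.
Proof.
under eq_bigr do rewrite jump_probE.
by rewrite -mulr_suml divff // gt_eqF ?(exit_rate_gt0 hq).
Qed.

Lemma esum_jump_probZ e x (f : T -> R) : 0 <= e -> (forall y, 0 <= f y)%R ->
  \esum_(y in [set: T]) (e * (P x y * f y)%:E) =
  e * (\sum_(y <- supp x) P x y * f y)%:E.
Proof.
move=> e_ge0 f_ge0; have Pf_ge0 y : 0 <= (P x y * f y)%:E.
  by rewrite lee_fin mulr_ge0 ?jump_prob_ge0.
rewrite (esum_finite_support (supp_uniq hq x)).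
- by rewrite -sumEFin ge0_sume_distrr.
- by move=> y /(rate_supp hq); rewrite jump_probE => ->; rewrite !mul0r mule0.
- by move=> y; rewrite mule_ge0.
Qed.

Section Target.
Variable x : T.

Definition taboo_mean j (g : T -> R) := \esum_(y in [set: T]) (taboo q x j y * (g y)%:E).

Definition taboo_step (g : T -> R) w :=
  (\sum_(y <- supp w) P w y * (if y == x then 0 else g y))%R.

Lemma taboo_ge0 j y : 0 <= taboo q x j y.
Proof.
elim: j y => [|j IH] y /=; first by rewrite lee_fin.
by case: ifP => // _; apply: esum_ge0 => w _; rewrite mule_ge0 ?lee_fin ?jump_prob_ge0.
Qed.

Lemma taboo_mean_ge0 j g : (forall w, 0 <= g w)%R -> 0 <= taboo_mean j g.
Proof. by move=> g_ge0; apply: esum_ge0 => w _; rewrite mule_ge0 ?taboo_ge0 ?lee_fin. Qed.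

Lemma taboo_step_ge0 g : (forall w, 0 <= g w)%R -> forall w, (0 <= taboo_step g w)%R.
Proof.
by move=> g_ge0 w; apply: sumr_ge0 => y _; rewrite mulr_ge0 ?jump_prob_ge0 //; case: ifP.
Qed.

Lemma taboo_mean0 g : (forall w, 0 <= g w)%R -> taboo_mean 0 g = (g x)%:E.
Proof.
move=> g_ge0; rewrite /taboo_mean (@esum_finite_support _ _ _ [:: x]) //.
- by rewrite big_seq1 /= eqxx mul1e.
- by move=> y; rewrite inE /= => /negPf ->; rewrite mul0e.
- by move=> y; rewrite mule_ge0 ?lee_fin.
Qed.

Lemma taboo_meanS j g : (forall w, 0 <= g w)%R ->
  taboo_mean j.+1 g = taboo_mean j (taboo_step g).
Proof.
move=> g_ge0; have g'_ge0 y : (0 <= if y == x then 0 else g y)%R by case: ifP.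
transitivity (\esum_(y in [set: T]) \esum_(w in [set: T])
    (taboo q x j w * (P w y * (if y == x then 0 else g y))%:E)).
  apply: eq_esum => y _ /=; case: eqP => [_|_].
    by rewrite mul0e esum1 // => w _; rewrite mulr0 mule0.
  rewrite muleC -esumZl // => [|w]; last first.
    by rewrite mule_ge0 ?taboo_ge0 ?lee_fin ?jump_prob_ge0.
  by apply: eq_esum => w _; rewrite EFinM muleCA [(g y)%:E * _]muleC.
rewrite esum_swap; last first.
  by move=> y w; rewrite mule_ge0 ?taboo_ge0 ?lee_fin ?mulr_ge0 ?jump_prob_ge0.
by apply: eq_esum => w _; rewrite esum_jump_probZ ?taboo_ge0.
Qed.

Lemma taboo_meanD j f g : (forall w, 0 <= f w)%R -> (forall w, 0 <= g w)%R ->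
  taboo_mean j f + taboo_mean j g = taboo_mean j (fun w => f w + g w)%R.
Proof.
move=> f_ge0 g_ge0; rewrite /taboo_mean -esumD.
- by apply: eq_esum => w _; rewrite EFinD ge0_muleDr ?lee_fin.
- by move=> w _; rewrite mule_ge0 ?taboo_ge0 ?lee_fin.
- by move=> w _; rewrite mule_ge0 ?taboo_ge0 ?lee_fin.
Qed.

Lemma le_taboo_meanS j f g : (forall w, w != x -> f w <= g w)%R ->
  taboo_mean j.+1 f <= taboo_mean j.+1 g.
Proof.
move=> fg; apply: le_esum => w _; case: (eqVneq w x) => [->|wx].
  by rewrite /= eqxx !mul0e.
by apply: lee_wpmul2l; rewrite ?taboo_ge0 // lee_fin fg.
Qed.

Definition survival j := taboo_mean j (fun=> 1%R).

Definition first_return j := taboo_mean j (fun w => P w x).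

Lemma survival_ge0 j : 0 <= survival j.
Proof. exact: taboo_mean_ge0. Qed.

Lemma first_return_ge0 j : 0 <= first_return j.
Proof. by apply: taboo_mean_ge0 => w; exact: jump_prob_ge0. Qed.

Lemma taboo_step_split g w :
  (taboo_step g w + P w x * g x = \sum_(y <- supp w) P w y * g y)%R.
Proof.
rewrite /taboo_step; have [x_supp|x_nsupp] := boolP (x \in supp w).
  rewrite [in RHS](bigD1_seq x) ?(supp_uniq hq) //= [in LHS](bigD1_seq x) ?(supp_uniq hq) //=.
  rewrite eqxx mulr0 add0r addrC; congr (_ + _)%R.
  by apply: eq_bigr => y /negPf ->.
rewrite jump_probE (rate_supp hq) // !mul0r addr0; apply: eq_big_seq => y y_supp.
by case: eqP => // yx; move: x_nsupp; rewrite -yx y_supp.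
Qed.

Lemma survivalS j : survival j.+1 + first_return j = survival j.
Proof.
rewrite /survival taboo_meanS // taboo_meanD; last 2 first.
- exact: taboo_step_ge0.
- by move=> w; exact: jump_prob_ge0.
congr taboo_mean; apply/funext => w.
rewrite -[P w x]mulr1 taboo_step_split -[RHS](sum_jump_prob w).
by apply: eq_bigr => y _; exact: mulr1.
Qed.

Lemma sum_first_return N : \sum_(j < N) first_return j + survival N = 1.
Proof.
elim: N => [|N IH]; first by rewrite big_ord0 add0e /survival taboo_mean0.
by rewrite big_ord_recr /= -addeA [first_return N + _]addeC survivalS.
Qed.

Lemma survival_fin_num N : survival N \is a fin_num.
Proof.
rewrite ge0_fin_numE ?survival_ge0 // (le_lt_trans _ (ltry 1%R)) //.
by rewrite -(sum_first_return N) leeDr // sume_ge0 // => j _; exact: first_return_ge0.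
Qed.

Lemma le_survival m n : (m <= n)%N -> survival n <= survival m.
Proof.
elim: n => [|n IH]; first by rewrite leqn0 => /eqP ->.
rewrite leq_eqVlt => /orP[/eqP -> //|/IH]; apply: le_trans.
by rewrite -(survivalS n) leeDl // first_return_ge0.
Qed.

Lemma return_probE : return_prob q x = \sum_(j <oo) first_return j.
Proof.
rewrite /return_prob (@esum_nat_pair _ _ (fun k w => taboo q x k w * (P w x)%:E)) //.
by move=> k w; rewrite mule_ge0 ?taboo_ge0 ?lee_fin ?jump_prob_ge0.
Qed.

Lemma mean_return_timeE :
  mean_return_time q x = \sum_(j <oo) taboo_mean j hold.
Proof.
rewrite /mean_return_time; under eq_esum do rewrite mean_holdingE.
rewrite (@esum_nat_pair _ _ (fun k w => taboo q x k w * ((rate w)^-1)%:E)) //.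
by move=> k w; rewrite mule_ge0 ?taboo_ge0 ?lee_fin ?inv_exit_rate_ge0.
Qed.

Definition lyapunov (V : T -> R) := (forall w, 0 <= V w)%R /\
  (forall w, w != x -> (rate w)^-1 + taboo_step V w <= V w)%R.

Lemma lyapunov_of_drift V : (forall w, 0 <= V w)%R ->
  (forall w, w != x -> 1 + \sum_(y <- supp w) q w y * V y <= rate w * V w)%R ->
  lyapunov V.
Proof.
move=> V_ge0 drift; split=> // w wx; have rw := exit_rate_gt0 hq w.
rewrite -(ler_pM2l rw) mulrDr mulfV ?gt_eqF //; apply: le_trans (drift w wx).
rewrite lerD2l /taboo_step mulr_sumr; apply: ler_sum => y _.
rewrite jump_probE mulrA mulrCA mulfV ?gt_eqF // mulr1 ler_wpM2l ?(rate_ge0 hq) //.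
by case: ifP.
Qed.

Section Foster.
Variable V : T -> R.
Hypothesis hV : lyapunov V.
Let K := ((rate x)^-1 + taboo_step V x)%R.

Lemma sum_taboo_mean_holding_le N : \sum_(j < N) taboo_mean j hold <= K%:E.
Proof.
have hold_ge0 := inv_exit_rate_ge0.
have [V_ge0 V_drift] := hV; have stepV_ge0 := taboo_step_ge0 V_ge0.
have telescope n : \sum_(j < n.+1) taboo_mean j hold + taboo_mean n.+1 V <= K%:E.
  elim: n => [|n IH].
    rewrite big_ord1 /= taboo_meanS // taboo_meanD // taboo_mean0 => [|w].
      exact: lexx.
    exact: addr_ge0.
  rewrite big_ord_recr /= -addeA; apply: le_trans IH; apply: leeD => //.
  rewrite [taboo_mean n.+2 V]taboo_meanS // taboo_meanD //.
  by apply: le_taboo_meanS; exact: V_drift.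
case: N => [|N]; last by apply: le_trans (telescope N); rewrite leeDl // taboo_mean_ge0.
by rewrite big_ord0 lee_fin addr_ge0.
Qed.

Lemma mean_return_time_le : mean_return_time q x <= K%:E.
Proof.
rewrite mean_return_timeE; apply: lime_le.
  by apply: is_cvg_nneseries => j _ _; exact/taboo_mean_ge0/inv_exit_rate_ge0.
by apply: nearW => n; rewrite big_mkord sum_taboo_mean_holding_le.
Qed.

(* Every jump before the return takes expected time at least 1/M. *)
Lemma mul_survival_le N : (N%:R)%:E * survival N <= (M * K)%:E.
Proof.
have M_gt0 : (0 < M)%R := lt_le_trans (exit_rate_gt0 hq x) (exit_rate_le hq x).
have survival_le_holding j : survival j <= M%:E * taboo_mean j hold.
  rewrite /survival /taboo_mean -esumZl; last 2 first.
  - exact: ltW.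
  - by move=> w; rewrite mule_ge0 ?taboo_ge0 ?lee_fin ?inv_exit_rate_ge0.
  apply: le_esum => w _; rewrite muleCA -EFinM lee_wpmul2l ?taboo_ge0 // lee_fin.
  by rewrite ler_pdivlMr ?(exit_rate_gt0 hq) // mul1r (exit_rate_le hq).
have -> : (N%:R)%:E * survival N = \sum_(j < N) survival N.
  by rewrite -(fineK (survival_fin_num N)) -EFinM sumEFin sumr_const card_ord mulr_natl.
apply: (@le_trans _ _ (\sum_(j < N) M%:E * taboo_mean j hold)).
  apply: lee_sum => j _; apply: le_trans (survival_le_holding j).
  exact/le_survival/ltnW.
rewrite -ge0_sume_distrr => [|j _]; last exact/taboo_mean_ge0/inv_exit_rate_ge0.
by rewrite EFinM; apply: lee_wpmul2l; [rewrite lee_fin ltW | exact: sum_taboo_mean_holding_le].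
Qed.

Lemma recurrent_of_lyapunov : recurrent q x.
Proof.
rewrite /recurrent return_probE; apply/eqP; rewrite eq_le; apply/andP; split.
  apply: lime_le; first by apply: is_cvg_nneseries => j _ _; exact: first_return_ge0.
  by apply: nearW => n; rewrite big_mkord -(sum_first_return n) leeDl ?survival_ge0.
apply/lee_addgt0Pr => e e_gt0; pose N := (Num.truncn (M * K / e)).+1.
rewrite -(sum_first_return N); apply: leeD.
  by rewrite -(big_mkord xpredT); apply: nneseries_lim_ge => j _ _; exact: first_return_ge0.
have := mul_survival_le N; rewrite -(fineK (survival_fin_num N)) -EFinM !lee_fin.
have : (M * K < N%:R * e)%R by rewrite -ltr_pdivrMr ?truncnS_gt.
have : (0 < N%:R :> R)%R by rewrite ltr0Sn.
nra.
Qed.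

Lemma positive_recurrent_of_lyapunov : positive_recurrent q x.
Proof.
by split; [exact: recurrent_of_lyapunov | exact: le_lt_trans mean_return_time_le (ltry _)].
Qed.

End Foster.

End Target.

(* Reset V to 0 at z and add the constant C: the jump z -> y, of probability P z y,
   then pays for the whole cost 1/q(z) + E_z[V(Z_1); Z_1 <> z]. *)
Lemma lyapunov_jump z y V : lyapunov z V -> (0 < q z y)%R -> y != z ->
  exists V', lyapunov y V'.
Proof.
move=> [V_ge0 V_drift] qzy_gt0 yz.
have Pzy_gt0 : (0 < P z y)%R by rewrite jump_probE divr_gt0 ?(exit_rate_gt0 hq).
pose Vz u := if u == z then 0%R else V u.
have Vz_ge0 u : (0 <= Vz u)%R by rewrite /Vz; case: ifP.
pose C := (((rate z)^-1 + taboo_step z V z) / P z y)%R.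
have C_ge0 : (0 <= C)%R.
  by rewrite divr_ge0 ?addr_ge0 ?inv_exit_rate_ge0 ?taboo_step_ge0 // ltW.
pose V' u := (Vz u + C)%R.
have V'_mean w : (\sum_(u <- supp w) P w u * V' u = taboo_step z V w + C)%R.
  rewrite -[in RHS](mulr1 C) -(sum_jump_prob w) mulr_sumr -big_split.
  by apply: eq_bigr => u _; rewrite mulrDr [(C * _)%R]mulrC.
have V'_ge0 u : (0 <= V' u)%R by rewrite addr_ge0.
exists V'; split=> // w wy.
have [->|wz] := eqVneq w z.
  rewrite /V' /Vz eqxx add0r; have := taboo_step_split y V' z.
  rewrite V'_mean => split_z.
  have : (P z y * C = (rate z)^-1 + taboo_step z V z)%R by rewrite mulrC divfK ?gt_eqF.
  have := Vz_ge0 y; have := jump_prob_ge0 z y; rewrite /V' in split_z; nra.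
apply: le_trans (_ : (rate w)^-1 + (taboo_step z V w + C) <= _)%R.
  by rewrite lerD2l -V'_mean -(taboo_step_split y) lerDl mulr_ge0 ?jump_prob_ge0.
by rewrite /V' /Vz (negPf wz) addrA lerD2r V_drift.
Qed.

Lemma return_prob_eq0 x : (forall w, q w x != 0%R -> forall v, q v w = 0%R) ->
  return_prob q x = 0.
Proof.
move=> no_entry; rewrite /return_prob esum1 // => -[[|k] w] _ /=.
  case: eqP => [->|_]; last by rewrite mul0e.
  by rewrite jump_probE (rate_diag hq) mul0r mule0.
have [qwx|/no_entry qw0] := eqVneq (q w x) 0%R.
  by rewrite jump_probE qwx mul0r mule0.
case: ifP => _; first by rewrite mul0e.
by rewrite esum1 ?mul0e // => v _; rewrite jump_probE qw0 mul0r mule0.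
Qed.
End JumpChain.

Definition queue_supp (x : nat * 'I_4) : seq (nat * 'I_4) :=
  let: (n, i) := x in
  if (i < 3)%N then (n.+1, inord i.+1) :: (if (0 < n)%N then [:: (n.-1, inord i.+1)] else [::])
  else [:: (n.+2, inord 0)].

Lemma val_inordS (i : 'I_4) : (i < 3)%N -> val (inord i.+1 : 'I_4) = i.+1.
Proof. by move=> i_lt3; rewrite /= inordK. Qed.

Section QueueRates.
Context {R : realType} (lam mu a b : R).

Local Notation q := (queue_rate lam mu a b).
Local Notation mu_ := (mu_phase mu a b).

Lemma queue_rate_up n (i : 'I_4) : (i < 3)%N -> q (n, i) (n.+1, inord i.+1) = lam.
Proof.
move=> i_lt3; rewrite /queue_rate i_lt3 val_inordS // !eqxx.
have -> : (n.+2 == n) = false by lia.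
by rewrite andbF addr0.
Qed.

Lemma queue_rate_down n (i : 'I_4) : (i < 3)%N -> q (n.+1, i) (n, inord i.+1) = mu_ i.
Proof.
move=> i_lt3; rewrite /queue_rate i_lt3 val_inordS // !eqxx.
have -> : (n == n.+2) = false by lia.
by rewrite add0r.
Qed.

Lemma queue_rate_vacation n (i : 'I_4) : ~~ (i < 3)%N -> q (n, i) (n.+2, inord 0) = lam / 2.
Proof. by move=> /negPf i_ge3; rewrite /queue_rate i_ge3 /= inordK // !eqxx. Qed.

Lemma queue_rate_diag x : q x x = 0.
Proof.
case: x => n i; rewrite /queue_rate.
have -> : (i == i.+1 :> nat) = false by lia.
have -> : (n == n.+2) = false by lia.
by rewrite andbF if_same.
Qed.

Lemma queue_supp_uniq x : uniq (queue_supp x).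
Proof.
case: x => n i /=; case: ifP => // _; case: ifP => //= n_gt0.
by rewrite inE andbT xpair_eqE negb_and; apply/orP; left; apply/eqP; lia.
Qed.

Lemma queue_rate_supp x y : y \notin queue_supp x -> q x y = 0.
Proof.
case: x y => n i [m j] /=; rewrite /queue_rate; case: ifP => i_lt3; last first.
  case: ifP => // /andP[/eqP j0 /eqP ->].
  by rewrite (_ : j = inord 0) ?inE ?eqxx //; apply: val_inj; rewrite /= j0 inordK.
case: eqP => // j_succ; have -> : j = inord i.+1 by apply: val_inj; rewrite val_inordS.
rewrite inE negb_or xpair_eqE eqxx andbT => /andP[/negPf -> y_out].
rewrite add0r; case: ifP => // /andP[n_gt0 /eqP m_pred]; move: y_out.
by rewrite n_gt0 -m_pred /= inE eqxx.
Qed.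

Lemma queue_sumE n (i : 'I_4) (f : nat * 'I_4 -> R) :
  \sum_(y <- queue_supp (n, i)) q (n, i) y * f y =
  if (i < 3)%N then
    lam * f (n.+1, inord i.+1) + (if n is m.+1 then mu_ i * f (m, inord i.+1) else 0)
  else lam / 2 * f (n.+2, inord 0).
Proof.
rewrite /queue_supp; case: ifPn => i3; last by rewrite big_seq1 queue_rate_vacation.
rewrite big_cons queue_rate_up //; congr (_ + _).
by case: n => [|n]; rewrite ?big_nil // big_seq1 queue_rate_down.
Qed.

Lemma queue_exit_rate n (i : 'I_4) :
  \sum_(y <- queue_supp (n, i)) q (n, i) y =
  if (i < 3)%N then lam + (if n is _.+1 then mu_ i else 0) else lam / 2.
Proof.
rewrite (eq_bigr (fun y => q (n, i) y * 1)) => [|y _]; last by rewrite mulr1.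
by rewrite queue_sumE !mulr1; case: n => [|n]; rewrite ?mulr0.
Qed.

Lemma queue_rate_to_phase0 w n : (n < 2)%N -> q w (n, inord 0) = 0.
Proof.
move=> n_lt2; case: w => m i; rewrite /queue_rate /= inordK //=.
have -> : (n == m.+2) = false by lia.
by rewrite if_same.
Qed.

Lemma queue_rate_to01 w : q w (0%N, inord 1) != 0 -> w = (1%N, inord 0).
Proof.
case: w => m [[|i] i_lt4]; rewrite /queue_rate /= inordK //=; last by rewrite if_same eqxx.
case: m => [|[|m]] /=; rewrite ?add0r ?addr0 ?eqxx //.
by move=> _; congr pair; apply: val_inj; rewrite /= inordK.
Qed.

End QueueRates.

Section QueueBoundedRates.
Context {R : realType} (lam mu a b : R).
Hypotheses (lam_gt0 : 0 < lam) (mu_gt0 : 0 < mu) (a_gt0 : 0 < a) (b_gt0 : 0 < b).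

Local Notation q := (queue_rate lam mu a b).
Local Notation mu_ := (mu_phase mu a b).

Lemma mu_phase_ge0 i : 0 <= mu_ i.
Proof. by rewrite /mu_phase; (repeat case: ifP => _); rewrite ?mulr_ge0 // ltW. Qed.

Lemma mu_phase_gt0 (i : 'I_4) : (i < 3)%N -> 0 < mu_ i.
Proof. by case: i => [[|[|[|]]] ?] //= _; rewrite /mu_phase /= ?mulr_gt0. Qed.

Lemma mu_phase_le i : mu_ i <= mu + a * mu + b * mu.
Proof.
have [mu_ge0 amu bmu] : [/\ 0 <= mu, 0 <= a * mu & 0 <= b * mu].
  by split; rewrite ?mulr_ge0 // ltW.
rewrite /mu_phase; (repeat case: ifP => _); lra.
Qed.

Lemma queue_rate_ge0 x y : 0 <= q x y.
Proof.
case: x y => n i [m j]; rewrite /queue_rate.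
case: ifP => _; last by case: ifP => _ //; rewrite divr_ge0 // ltW.
by case: ifP => _ //; rewrite addr_ge0 //; case: ifP => _ //; rewrite ?mu_phase_ge0 // ltW.
Qed.

Lemma queue_bounded_rates :
  bounded_rates q queue_supp (lam + (mu + a * mu + b * mu)).
Proof.
split; [exact: queue_rate_ge0 | exact: queue_rate_diag | exact: queue_supp_uniq
       | exact: queue_rate_supp | |] => -[n i]; rewrite queue_exit_rate.
  case: ifP => i3; last by rewrite divr_gt0.
  by case: n => [|n]; rewrite ?addr0 ?addr_gt0 ?mu_phase_gt0.
have := mu_phase_le i; have := mu_phase_ge0 i.
have [lam_ge0 amu bmu] : [/\ 0 <= lam, 0 <= a * mu & 0 <= b * mu].
  by split; rewrite ?mulr_ge0 // ltW.
by case: ifP => _; [case: n => [|n] | idtac]; lra.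
Qed.

End QueueBoundedRates.

Section QueueLyapunov.
Context {R : realType} (lam mu a b : R).
Hypotheses (lam_gt0 : 0 < lam) (mu_gt0 : 0 < mu) (a_gt0 : 0 < a) (b_gt0 : 0 < b).

Local Notation q := (queue_rate lam mu a b).
Local Notation mu_ := (mu_phase mu a b).

Definition cycle_time :=
  1 / (lam + mu) + 1 / (lam + a * mu) + 1 / (lam + b * mu) + 2 / lam.

Definition cycle_departures :=
  mu / (lam + mu) + a * mu / (lam + a * mu) + b * mu / (lam + b * mu) + 0 * (2 / lam).

Definition cycle_growth := lam * cycle_time - cycle_departures.

Definition slope := cycle_time / - cycle_growth.

Definition phase_gap k := match k with
  | 0 => (1 + slope * (lam - mu)) / (lam + mu)
  | 1 => (1 + slope * (lam - a * mu)) / (lam + a * mu)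
  | 2 => (1 + slope * (lam - b * mu)) / (lam + b * mu)
  | _ => 2 * slope + 2 / lam
  end.

(* For V(n, k) = slope n + phase_offset k the drift equation inside phase k says
   phase_offset k - phase_offset (k + 1 mod 4) = phase_gap k, which is consistent
   around the cycle by sum_phase_gap; the norms only make the offsets nonnegative. *)
Definition phase_offset k :=
  `|phase_gap 0| + `|phase_gap 1| + `|phase_gap 2| + `|phase_gap 3| +
  match k with
  | 0 => phase_gap 2 + phase_gap 1 + phase_gap 0
  | 1 => phase_gap 2 + phase_gap 1
  | 2 => phase_gap 2
  | _ => 0
  end.

Definition lin_lyapunov n k := slope * n%:R + phase_offset k.

(* At the states whose transitions leave the range of the affine formula, the value
   is the solution of the drift equation there. *)
Definition lyapunov_value n k :=
  let V02 := 1 / lam + lin_lyapunov 1 3 in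
  let V01 := 1 / lam + lin_lyapunov 1 2 in
  let V11 := (1 + lam * lin_lyapunov 2 2 + a * mu * V02) / (lam + a * mu) in
  let V10 := (1 + lam * lin_lyapunov 2 1 + mu * V01) / (lam + mu) in
  match k, n with
  | 0, 0 => 1 / lam + V11
  | 0, 1 => V10
  | 1, 0 => V01
  | 1, 1 => V11
  | 2, 0 => V02
  | _, _ => lin_lyapunov n k
  end.

Definition queue_lyapunov (w : nat * 'I_4) := lyapunov_value w.1 w.2.

Lemma queue_lyapunov_inord n k : (k < 4)%N ->
  queue_lyapunov (n, inord k) = lyapunov_value n k.
Proof. by move=> k_lt4; rewrite /queue_lyapunov /= inordK. Qed.

Let denominators_neq0 :
  [/\ lam + mu != 0, lam + a * mu != 0, lam + b * mu != 0 & lam != 0].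
Proof. by split; rewrite gt_eqF ?addr_gt0 ?mulr_gt0. Qed.

Lemma sum_phase_gap : cycle_growth != 0 ->
  phase_gap 0 + phase_gap 1 + phase_gap 2 + phase_gap 3 = 0.
Proof.
move=> growth_neq0; have [lmu lamu lbmu l0] := denominators_neq0.
have -> : phase_gap 0 + phase_gap 1 + phase_gap 2 + phase_gap 3
    = cycle_time + slope * cycle_growth.
  rewrite /= /cycle_growth /cycle_departures /cycle_time.
  by field; rewrite ?lmu ?lamu ?lbmu ?l0.
by rewrite /slope; field; rewrite growth_neq0.
Qed.

Lemma lin_lyapunov_drift m (i : 'I_4) : (i < 3)%N ->
  1 + lam * lin_lyapunov m.+2 i.+1 + mu_ i * lin_lyapunov m i.+1
  = (lam + mu_ i) * lin_lyapunov m.+1 i.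
Proof.
have [lmu lamu lbmu l0] := denominators_neq0.
case: i => [[|[|[|]]] ?] //= _; rewrite /lin_lyapunov /phase_offset /mu_phase /= !mulrS.
all: by field; rewrite ?lmu ?lamu ?lbmu ?l0.
Qed.

Lemma lin_lyapunov_drift_vacation n : cycle_growth != 0 ->
  1 + lam / 2 * lin_lyapunov n.+2 0 = lam / 2 * lin_lyapunov n 3.
Proof.
move=> /sum_phase_gap gap_sum; have [lmu lamu lbmu l0] := denominators_neq0.
have gap0 : phase_gap 0 = - (phase_gap 1 + phase_gap 2 + phase_gap 3) by lra.
by rewrite /lin_lyapunov /phase_offset gap0 /= !mulrS; field; rewrite ?lmu ?lamu ?lbmu ?l0.
Qed.

Lemma cycle_growth_lt0 : lam < cycle_departures / cycle_time -> cycle_growth < 0.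
Proof.
have time_gt0 : 0 < cycle_time by rewrite !addr_gt0 ?divr_gt0 ?addr_gt0 ?mulr_gt0.
by rewrite /cycle_growth subr_lt0 -ltr_pdivlMr.
Qed.

Hypothesis growth_lt0 : cycle_growth < 0.

Lemma slope_ge0 : 0 <= slope.
Proof.
rewrite /slope divr_ge0 ?oppr_ge0 ?ltW //.
by rewrite !addr_gt0 ?divr_gt0 ?addr_gt0 ?mulr_gt0.
Qed.

Lemma phase_offset_ge0 k : 0 <= phase_offset k.
Proof.
have := ler_norm (- phase_gap 0); have := ler_norm (- phase_gap 1).
have := ler_norm (- phase_gap 2); rewrite !normrN.
have := normr_ge0 (phase_gap 0); have := normr_ge0 (phase_gap 1).
have := normr_ge0 (phase_gap 2); have := normr_ge0 (phase_gap 3).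
rewrite /phase_offset; set g0 := phase_gap 0; set g1 := phase_gap 1; set g2 := phase_gap 2.
by set g3 := phase_gap 3; case: k => [|[|[|k]]] /=; lra.
Qed.

Lemma lin_lyapunov_ge0 n k : 0 <= lin_lyapunov n k.
Proof. by rewrite /lin_lyapunov addr_ge0 ?phase_offset_ge0 // mulr_ge0 ?slope_ge0. Qed.

Lemma queue_lyapunov_ge0 w : 0 <= queue_lyapunov w.
Proof.
have [lam_ge0 mu_ge0 a_ge0] : [/\ 0 <= lam, 0 <= mu & 0 <= a] by split; exact: ltW.
have inv_lam_ge0 : 0 <= 1 / lam by rewrite divr_ge0.
have V02_ge0 : 0 <= 1 / lam + lin_lyapunov 1 3 by apply: addr_ge0; rewrite ?lin_lyapunov_ge0.
have V01_ge0 : 0 <= 1 / lam + lin_lyapunov 1 2 by apply: addr_ge0; rewrite ?lin_lyapunov_ge0.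
have V11_ge0 : 0 <= (1 + lam * lin_lyapunov 2 2 + a * mu * (1 / lam + lin_lyapunov 1 3))
    / (lam + a * mu).
  apply: divr_ge0; last by apply: addr_ge0; rewrite // mulr_ge0.
  apply: addr_ge0; last by apply: mulr_ge0 => //; exact: mulr_ge0.
  by apply: addr_ge0; rewrite // mulr_ge0 ?lin_lyapunov_ge0.
case: w => n [k k_lt4]; rewrite /queue_lyapunov /lyapunov_value /=.
case: k k_lt4 => [|[|[|k]]] _; case: n => [|[|n]] //; try exact: lin_lyapunov_ge0.
  exact: addr_ge0.
apply: divr_ge0; last exact: addr_ge0.
apply: addr_ge0; last exact: mulr_ge0.
by apply: addr_ge0; rewrite // mulr_ge0 ?lin_lyapunov_ge0.
Qed.

Lemma queue_lyapunov_drift w : w != (2%N, inord 0) ->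
  1 + \sum_(y <- queue_supp w) q w y * queue_lyapunov y
  = (\sum_(y <- queue_supp w) q w y) * queue_lyapunov w.
Proof.
have [lmu lamu lbmu l0] := denominators_neq0.
case: w => n [[|[|[|[|//]]]] k_lt4] w_ne; rewrite queue_sumE queue_exit_rate /=.
- case: n w_ne => [|[|[|m]]] w_ne; rewrite ?queue_lyapunov_inord // /queue_lyapunov /=.
  + by rewrite /mu_phase /=; field; rewrite ?lmu ?lamu ?lbmu ?l0.
  + by rewrite /mu_phase /=; field; rewrite ?lmu ?lamu ?lbmu ?l0.
  + by move: w_ne; rewrite xpair_eqE -val_eqE /= inordK.
  + by rewrite addrA (@lin_lyapunov_drift _ (Ordinal k_lt4)).
- case: n w_ne => [|[|m]] w_ne; rewrite ?queue_lyapunov_inord // /queue_lyapunov /=.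
  + by rewrite /mu_phase /=; field; rewrite ?lmu ?lamu ?lbmu ?l0.
  + by rewrite /mu_phase /=; field; rewrite ?lmu ?lamu ?lbmu ?l0.
  + by rewrite addrA (@lin_lyapunov_drift _ (Ordinal k_lt4)).
- case: n w_ne => [|m] w_ne; rewrite ?queue_lyapunov_inord // /queue_lyapunov /=.
  + by rewrite /mu_phase /=; field; rewrite ?lmu ?lamu ?lbmu ?l0.
  + by rewrite addrA (@lin_lyapunov_drift _ (Ordinal k_lt4)).
- rewrite queue_lyapunov_inord // /queue_lyapunov /=.
  exact/lin_lyapunov_drift_vacation/ltr0_neq0.
Qed.

End QueueLyapunov.

Section QueueStability.
Context {R : realType} (lam mu a b : R).
Hypotheses (lam_gt0 : 0 < lam) (mu_gt0 : 0 < mu) (a_gt0 : 0 < a) (b_gt0 : 0 < b).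

Local Notation q := (queue_rate lam mu a b).

Let hq := queue_bounded_rates lam_gt0 mu_gt0 a_gt0 b_gt0.

Lemma queue_return_prob_eq0 n (i : 'I_4) : (n + i < 2)%N -> return_prob q (n, i) = 0.
Proof.
move=> small; apply: (return_prob_eq0 hq) => w.
have -> : i = inord i by rewrite inord_val.
case: i small => [[|[|i]] i_lt4] small /=.
- by rewrite queue_rate_to_phase0 ?eqxx //; lia.
- case: n small => [_|n]; last by rewrite addn1.
  by move=> /queue_rate_to01 -> v; exact: queue_rate_to_phase0.
- by rewrite !addnS in small.
Qed.

Hypothesis growth_lt0 : cycle_growth lam mu a b < 0.

Lemma queue_lyapunov_at_entry :
  lyapunov q queue_supp (2%N, inord 0) (queue_lyapunov lam mu a b).
Proof.
apply: (lyapunov_of_drift hq) => [w|w w_ne]; first exact: queue_lyapunov_ge0.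
by rewrite queue_lyapunov_drift.
Qed.

Lemma queue_lyapunov_exists n (i : 'I_4) : (2 <= n + i)%N ->
  exists V, lyapunov q queue_supp (n, i) V.
Proof.
pose good z := exists V, lyapunov q queue_supp z V.
have jump z y : good z -> 0 < q z y -> y != z -> good y.
  by move=> [V hV]; exact: (lyapunov_jump hq hV).
have val_inord k : (k < 4)%N -> nat_of_ord (inord k : 'I_4) = k := @inordK 3 k.
have up m k : (k < 3)%N -> good (m, inord k) -> good (m.+1, inord k.+1).
  move=> k_lt3 /jump; apply; last by rewrite xpair_eqE (gtn_eqF (ltnSn m)).
  have k_lt4 : (k < 4)%N := ltnW k_lt3.
  by rewrite -[X in inord X.+1](val_inord k) // queue_rate_up // val_inord.
have down m k : (k < 3)%N -> good (m.+1, inord k) -> good (m, inord k.+1).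
  move=> k_lt3 /jump; apply; last by rewrite xpair_eqE (ltn_eqF (ltnSn m)).
  have k_lt4 : (k < 4)%N := ltnW k_lt3.
  rewrite -[X in inord X.+1](val_inord k) // queue_rate_down ?val_inord //.
  by rewrite mu_phase_gt0 // val_inord.
have vacation m : good (m, inord 3) -> good (m.+2, inord 0).
  move=> /jump; apply; last by rewrite xpair_eqE (gtn_eqF (leqnSn m.+1)).
  by rewrite queue_rate_vacation ?val_inord // divr_gt0.
have phase0 m : good (m.+2, inord 0).
  elim: m => [|m IH].
    by exists (queue_lyapunov lam mu a b); exact: queue_lyapunov_at_entry.
  exact: vacation (down _ 2 isT (down _ 1 isT (up _ 0 isT IH))).
move=> n_i_ge2; have -> : i = inord i by rewrite inord_val.
case: i n_i_ge2 => [[|[|[|[|k]]]] k_lt4] //= n_i_ge2.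
- by case: n n_i_ge2 => [|[|m]] // _; exact: phase0.
- by case: n n_i_ge2 => [|m] // _; exact: down _ 0 isT (phase0 m).
- exact: down _ 1 isT (down _ 0 isT (phase0 n)).
- exact: down _ 2 isT (down _ 1 isT (down _ 0 isT (phase0 n.+1))).
Qed.

End QueueStability.

Theorem theorem1 (R : realType) (lam mu a b : R) :
  0 < lam -> 0 < mu -> 0 < b -> b < a -> a < 1 ->
  lam <
    (mu / (lam + mu) + a * mu / (lam + a * mu) + b * mu / (lam + b * mu)
       + 0 * (2 / lam)) /
    (1 / (lam + mu) + 1 / (lam + a * mu) + 1 / (lam + b * mu) + 2 / lam) ->
  stable (queue_rate lam mu a b).
Proof.
move=> lam_gt0 mu_gt0 b_gt0 b_lt_a _ stability.
have a_gt0 := lt_trans b_gt0 b_lt_a.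
have growth_lt0 := cycle_growth_lt0 lam_gt0 mu_gt0 a_gt0 b_gt0 stability.
have hq := queue_bounded_rates lam_gt0 mu_gt0 a_gt0 b_gt0.
have pos_rec n (i : 'I_4) :
    (2 <= n + i)%N -> positive_recurrent (queue_rate lam mu a b) (n, i).
  move=> /(queue_lyapunov_exists lam_gt0 mu_gt0 a_gt0 b_gt0 growth_lt0) [V].
  exact: (positive_recurrent_of_lyapunov hq).
split; first by exists (2%N, inord 0); apply: pos_rec.
move=> [n i] rec; have [|n_i_lt2] := leqP 2 (n + i); first exact: pos_rec.
move: rec; rewrite /recurrent (queue_return_prob_eq0 lam_gt0 mu_gt0 a_gt0 b_gt0) //.
by move=> /eqP; rewrite eqe eq_sym oner_eq0.
Qed.
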